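(* Let $T$ be a continuous linear operator on a real or complex separable infinite-dimensional F-space $X$ and $\mathcal{F}$ a Furstenberg family. If there is an $\mathcal{F}$-recurrent vector $x$ for $T$ such that $\mathcal{C}_T(x)=\{Sx:S\in\mathcal{C}_T\}$ is dense in $X$, then for every $N\in\mathbb{N}$ the set $\mathcal{F}\mathrm{Rec}(T_{(N)})$ contains a dense infinite-dimensional vector subspace of $X^N$. In particular this holds whenever $T$ has a vector that is both $\mathcal{F}$-recurrent and cyclic, or $T$ has an $\mathcal{F}$-hypercyclic vector.
   Context: A Furstenberg family is a collection $\mathcal{F}$ of infinite subsets of $\mathbb{N}_0$, closed under supersets, with $A\cap[n,\infty)\in\mathcal{F}$ whenever $A\in\mathcal{F}$, $n\in\mathbb{N}$. $x$ is $\mathcal{F}$-recurrent if $\{n\geq0:T^nx\in U\}\in\mathcal{F}$ for every neighbourhood $U$ of $x$, and $\mathcal{F}$-hypercyclic if $\{n\geq0:T^nx\in U\}\in\mathcal{F}$ for every non-empty open $U\subset X$; $\mathcal{F}\mathrm{Rec}(\cdot)$ denotes the set of $\mathcal{F}$-recurrent vectors. $\mathcal{C}_T=\{S:X\to X \text{ continuous}:ST=TS\}$. $x$ is cyclic if $\mathrm{span}\{T^nx:n\geq0\}$ is dense. $T_{(N)}=T\oplus\cdots\oplus T$ on $X^N$. *)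

From HB Require Import structures.
From mathcomp Require Import all_boot all_order all_algebra.
From mathcomp Require Import all_classical all_reals all_analysis.
From mathcomp Require Import complex.

Set Implicit Arguments.
Unset Strict Implicit.
Unset Printing Implicit Defensive.

Import Order.TTheory GRing.Theory Num.Theory.
Local Open Scope classical_set_scope.
Local Open Scope ring_scope.

Definition RorC (R : realType) (b : bool) : numFieldType :=
  if b then (R : numFieldType) else ((R[i])%C : numFieldType).

Definition Fspace (R : realType) (K : numFieldType) (X : topologicalLmodType K)
  : Prop :=
  exists d : X -> X -> R,
    (forall x y, 0 <= d x y) /\
        (forall x y, d x y = 0 <-> x = y) /\
        (forall x y, d x y = d y x) /\
        (forall x y z, d x z <= d x y + d y z) /\
        (forall x y z, d (x + z) (y + z) = d x y) /\
        (forall (x : X) (A : set X),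
            nbhs x A <-> exists2 e : R, 0 < e & [set y | d x y < e] `<=` A) /\
        (forall u : nat -> X,
            (forall e : R, 0 < e -> exists N, forall m n,
                 (N <= m)%N -> (N <= n)%N -> d (u m) (u n) < e) ->
            exists l : X, u @ \oo --> l).

Definition separable_space (T : topologicalType) : Prop :=
  exists D : set T, countable D /\ dense D.

Definition lin_indep (K : numFieldType) (V : lmodType K) (n : nat)
  (v : 'I_n -> V) : Prop :=
  forall c : 'I_n -> K, \sum_(i < n) c i *: v i = 0 -> forall i, c i = 0.

Definition infinite_dimensional (K : numFieldType) (V : lmodType K) : Prop :=
  forall n, exists v : 'I_n -> V, lin_indep v.

Definition is_subspace (K : numFieldType) (V : lmodType K) (S : set V) : Prop :=
  [/\ S 0, (forall x y, S x -> S y -> S (x + y)) &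
      (forall (a : K) x, S x -> S (a *: x))].

Definition infdim_subspace (K : numFieldType) (V : lmodType K) (S : set V)
  : Prop :=
  forall n, exists v : 'I_n -> V, (forall i, S (v i)) /\ lin_indep v.

Definition Furstenberg_family (F : set (set nat)) : Prop :=
  [/\ (forall A, F A -> infinite_set A),
      (forall A B, F A -> A `<=` B -> F B) &
      (forall A n, F A -> F (A `&` [set k | (n <= k)%N]))].

Definition return_set (Y : Type) (f : Y -> Y) (x : Y) (U : set Y) : set nat :=
  [set n | U (iter n f x)].

Definition F_recurrent (F : set (set nat)) (Y : topologicalType) (f : Y -> Y)
  (x : Y) : Prop :=
  forall U : set Y, nbhs x U -> F (return_set f x U).

Definition FRec (F : set (set nat)) (Y : topologicalType) (f : Y -> Y)
  : set Y := [set x | F_recurrent F f x].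

Definition F_hypercyclic (F : set (set nat)) (Y : topologicalType) (f : Y -> Y)
  (x : Y) : Prop :=
  forall U : set Y, open U -> U !=set0 -> F (return_set f x U).

(** C_T: continuous (not necessarily linear) maps commuting with T. *)
Definition commutant (Y : topologicalType) (f : Y -> Y) : set (Y -> Y) :=
  [set S | continuous S /\ S \o f = f \o S].

Definition commutant_orbit (Y : topologicalType) (f : Y -> Y) (x : Y) : set Y :=
  [set S x | S in commutant f].

Definition orbit_span (K : numFieldType) (V : lmodType K) (f : V -> V) (x : V)
  : set V :=
  [set y | exists n (c : 'I_n -> K) (m : 'I_n -> nat),
             y = \sum_(i < n) c i *: iter (m i) f x].

Definition cyclic_vector (K : numFieldType) (X : topologicalLmodType K)
  (f : X -> X) (x : X) : Prop := dense (orbit_span f x).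

Definition power_space (X : Type) (N : nat) := {ptws 'I_N -> X}.

Definition diag_op (X : Type) (N : nat) (f : X -> X) :
  power_space X N -> power_space X N := fun v i => f (v i).

(* Let D = C_T(x). The commutant is closed under sums and scalar multiples, so
   D is a vector subspace; it contains the span of the orbit of x, and it is
   dense in each of the three cases (for an F-hypercyclic x the orbit itself is
   dense and x is F-recurrent).  Take S = D^N.  Every v in S is phi x for
   phi = (S_1, ..., S_N), which is continuous and satisfies
   phi o T = T_(N) o phi, so each return set of v to a neighbourhood U contains
   the return set of x to phi^-1(U), which lies in F.  S is dense in X^N because
   D is dense in X.  It is infinite-dimensional because finite-dimensional
   subspaces of X are closed, so the dense set D cannot lie in one: if span w
   is closed and u is not in it, the coefficient of u is a continuous linear
   functional on span (w, u), and since the scalar field is complete, limits of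
   sequences in span (w, u) stay there. *)

From HB Require Import structures.
From mathcomp Require Import all_boot all_order all_algebra.
From mathcomp Require Import all_classical all_reals all_analysis.
From mathcomp Require Import complex.
From mathcomp Require Import lra.
Import Order.TTheory GRing.Theory Num.Theory.
Local Open Scope classical_set_scope.
Local Open Scope ring_scope.
Set Implicit Arguments.
Unset Strict Implicit.
Unset Printing Implicit Defensive.

Definition seq_complete (K : numFieldType) : Prop :=
  forall u : nat -> K,
    (forall e : K, 0 < e -> exists N, forall m n,
       (N <= m)%N -> (N <= n)%N -> `|u m - u n| < e) ->
    exists l : K, forall e : K, 0 < e ->
      exists N, forall n, (N <= n)%N -> `|u n - l| < e.

Lemma seq_complete_real (R : realType) : seq_complete R.
Proof.
move=> u u_cauchy.
have : cvg ((u : nat -> R^o) @ \oo).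
  apply/cauchy_cvgP; apply: cauchy_exP => e e0.
  have [N HN] := u_cauchy e e0.
  by exists (u N); exists N => // n Nn; apply: HN.
move=> /cvgrPdist_lt u_cvg; exists (lim ((u : nat -> R^o) @ \oo)) => e e0.
have [N _ HN] := u_cvg e e0; exists N => n Nn.
by rewrite distrC; apply: HN.
Qed.

Section ComplexScalars.
Local Open Scope complex_scope.
Variable R : realType.

Lemma normc_ge_Re_Im (z : R[i]) :
  `|complex.Re z| <= complex.Re `|z| /\ `|complex.Im z| <= complex.Re `|z|.
Proof.
rewrite normc_def /=; split.
  by rewrite -sqrtr_sqr ler_wsqrtr // lerDl sqr_ge0.
by rewrite -sqrtr_sqr ler_wsqrtr // lerDr sqr_ge0.
Qed.

Lemma seq_complete_complex : seq_complete (R[i] : numFieldType).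
Proof.
move=> u u_cauchy.
have component_lim (p : R[i] -> R) : (forall z w, p (z - w) = p z - p w) ->
    (forall z, `|p z| <= complex.Re `|z|) ->
    exists l, forall e : R, 0 < e -> exists N, forall n, (N <= n)%N -> `|p (u n) - l| < e.
  move=> pB p_le; apply: seq_complete_real => e e0.
  have [|N HN] := u_cauchy e%:C; first by rewrite ltcR.
  exists N => m n Nm Nn; rewrite -pB; apply: le_lt_trans (p_le _) _.
  by move: (HN m n Nm Nn); rewrite normc_def ltcR.
have [lx Hx] := component_lim _ (fun z w => raddfB _ z w) (fun z => (normc_ge_Re_Im z).1).
have [ly Hy] := component_lim _ (fun z w => raddfB _ z w) (fun z => (normc_ge_Re_Im z).2).
exists (lx +i* ly) => -[r im]; rewrite ltcE /= => /andP[/eqP -> r0].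
have r2 : 0 < r / 2 by rewrite divr_gt0.
have [N1 H1] := Hx _ r2; have [N2 H2] := Hy _ r2.
exists (maxn N1 N2) => n Nn.
have h1 := H1 n (leq_trans (leq_maxl _ _) Nn).
have h2 := H2 n (leq_trans (leq_maxr _ _) Nn).
rewrite normc_def ltcR !raddfB /= -[X in _ < X](ger0_norm (ltW r0)) -sqrtr_sqr.
rewrite ltr_sqrt ?exprn_gt0 //.
move: h1 h2; rewrite !ltr_norml => /andP[? ?] /andP[? ?].
nra.
Qed.

End ComplexScalars.

Lemma seq_complete_RorC (R : realType) (b : bool) : seq_complete (RorC R b).
Proof. by case: b; [exact: seq_complete_real | exact: seq_complete_complex]. Qed.

Definition ord_snoc (T : Type) (k : nat) (f : 'I_k -> T) (a : T) : 'I_k.+1 -> T :=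
  fun i => if unlift ord_max i is Some j then f j else a.

Definition ord_belast (T : Type) (k : nat) (f : 'I_k.+1 -> T) : 'I_k -> T :=
  fun j => f (widen_ord (leqnSn k) j).

Lemma lift_max_widen k (j : 'I_k) : lift ord_max j = widen_ord (leqnSn k) j.
Proof. by apply: val_inj; exact: lift_max. Qed.

Section OrdSnoc.
Variables (T : Type) (k : nat).

Lemma ord_snoc_lift (f : 'I_k -> T) a j : ord_snoc f a (lift ord_max j) = f j.
Proof. by rewrite /ord_snoc liftK. Qed.

Lemma ord_snoc_widen (f : 'I_k -> T) a j :
  ord_snoc f a (widen_ord (leqnSn k) j) = f j.
Proof. by rewrite -lift_max_widen ord_snoc_lift. Qed.

Lemma ord_snoc_max (f : 'I_k -> T) a : ord_snoc f a ord_max = a.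
Proof. by rewrite /ord_snoc unlift_none. Qed.

Lemma ord_snoc_belast (f : 'I_k.+1 -> T) : ord_snoc (ord_belast f) (f ord_max) = f.
Proof.
apply: funext => i; case: (unliftP ord_max i) => [j ->|->].
  by rewrite ord_snoc_lift /ord_belast lift_max_widen.
exact: ord_snoc_max.
Qed.

End OrdSnoc.

Definition lspan (K : numFieldType) (V : lmodType K) (k : nat) (v : 'I_k -> V) : set V :=
  range (fun c : 'I_k -> K => \sum_(i < k) c i *: v i).

Section FiniteFamilies.
Variables (K : numFieldType) (V : lmodType K).

Lemma lincomb_ord_snoc k (c : 'I_k -> K) a (v : 'I_k -> V) z :
  \sum_(i < k.+1) ord_snoc c a i *: ord_snoc v z i = \sum_(j < k) c j *: v j + a *: z.
Proof. by rewrite big_ord_recr !ord_snoc_max; under eq_bigr do rewrite !ord_snoc_widen. Qed.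

Lemma is_subspace_lincomb (S : set V) k (c : 'I_k -> K) (v : 'I_k -> V) :
  is_subspace S -> (forall i, S (v i)) -> S (\sum_(i < k) c i *: v i).
Proof. by move=> [S0 SD SZ] Sv; apply: big_ind => // i _; exact: SZ. Qed.

Lemma lin_indep_snocE k (v : 'I_k -> V) z :
  lin_indep (ord_snoc v z) <-> lin_indep v /\ ~ lspan v z.
Proof.
split=> [vz_indep|[v_indep z_notin] c].
  split=> [c vc0 j|[c _ vcz]].
    have := vz_indep (ord_snoc c 0); rewrite lincomb_ord_snoc vc0 scale0r addr0.
    by move=> /(_ erefl (widen_ord (leqnSn k) j)); rewrite ord_snoc_widen.
  have := vz_indep (ord_snoc (fun i => - c i) 1).
  rewrite lincomb_ord_snoc scale1r -vcz.
  under eq_bigr do rewrite scaleNr.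
  by rewrite sumrN addNr => /(_ erefl ord_max) /eqP; rewrite ord_snoc_max oner_eq0.
rewrite -[c]ord_snoc_belast lincomb_ord_snoc => vcz0.
have cz0 : c ord_max = 0.
  apply: contrapT => /eqP cz_neq0; apply: z_notin.
  exists (fun j => - ((c ord_max)^-1 * ord_belast c j)) => //.
  apply: (scalerI cz_neq0).
  have -> : c ord_max *: z = - \sum_(j < k) ord_belast c j *: v j.
    by apply/eqP; rewrite -addr_eq0 addrC vcz0.
  rewrite scaler_sumr -sumrN.
  by apply: eq_bigr => j _; rewrite scalerA mulrN mulrA mulfV // mul1r scaleNr.
rewrite cz0 scale0r addr0 in vcz0.
move=> i; case: (unliftP ord_max i) => [j ->|->].
  by rewrite ord_snoc_lift (v_indep _ vcz0).
by rewrite ord_snoc_max.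
Qed.

Lemma lin_dep_in_lspan k (v : 'I_k -> V) (u : 'I_k.+1 -> V) :
  (forall j, lspan v (u j)) -> ~ lin_indep u.
Proof.
move=> u_span u_indep.
have /choice[A uA] : forall j, exists c : 'I_k -> K, u j = \sum_(i < k) c i *: v i.
  by move=> j; have [c _ <-] := u_span j; exists c.
pose M := \matrix_(j < k.+1, i < k) A j i.
have : kermx M != 0 by rewrite kermx_eq0 /row_free neq_ltn ltnS rank_leq_col.
move=> /rowV0Pn[c /sub_kermxP cM0 /rV0Pn[j0 cj0]].
move/eqP: cj0; apply; apply: (u_indep (fun j => c 0 j) _ j0).
transitivity (\sum_(i < k) (c *m M) 0 i *: v i); last first.
  by rewrite cM0 big1 // => i _; rewrite mxE scale0r.
under eq_bigr => j _ do rewrite uA scaler_sumr.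
rewrite exchange_big /=; apply: eq_bigr => i _.
rewrite mxE scaler_suml; apply: eq_bigr => j _.
by rewrite mxE scalerA.
Qed.

End FiniteFamilies.

Lemma scale_continuous_nbhs (K : numFieldType) (X : topologicalLmodType K)
    (l : K) (x : X) (U : set X) :
  nbhs (l *: x) U -> exists2 del : K, 0 < del &
    exists2 A : set X, nbhs x A & forall t m, `|l - t| < del -> A m -> U (t *: m).
Proof.
move=> /(@scale_continuous K X (l, x)) [[B A] /= [/nbhs_ballP[del del0 delB] xA] BAU].
by exists del => //; exists A => // t m lt Am; apply: (BAU (t, m)); split => //; exact: delB.
Qed.

Lemma closure_dense (T : topologicalType) (D : set T) y : dense D -> closure D y.
Proof.
move=> D_dense B; rewrite nbhsE => -[B' [oB' B'y] B'B].
have [|z [B'z Dz]] := D_dense B' _ oB'; first by exists y.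
by exists z; split => //; exact: B'B.
Qed.

Lemma dense_subset (T : topologicalType) (A B : set T) : dense A -> A `<=` B -> dense B.
Proof.
move=> A_dense AB O O0 oO; have [z [Oz Az]] := A_dense O O0 oO.
by exists z; split => //; exact: AB.
Qed.

Lemma ptws_cvg (I : Type) (Y : topologicalType) (G : set_system {ptws I -> Y})
    (v : {ptws I -> Y}) :
  Filter G -> (forall i, (fun g => g i) @ G --> v i) -> G --> v.
Proof.
move=> G_filter G_cvg; apply/cvg_sup => i; apply/cvg_image.
- by apply/seteqP; split=> y // _; exists (fun=> y).
- move=> B /G_cvg G_B; exists ((fun g => g i) @^-1` B) => //.
  by apply: image_preimage; apply/seteqP; split=> y // _; exists (fun=> y).
Qed.

Lemma continuous_ptws (I : Type) (Y Z : topologicalType) (f : I -> Y -> Z) :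
  (forall i, continuous (f i)) -> continuous (fun y => (fun i => f i y) : {ptws I -> Z}).
Proof. by move=> f_cont y; apply: ptws_cvg => i; exact: f_cont. Qed.

(* Move the coordinates into D one at a time: each partial map dfwith w i is
   continuous, so its preimage of O is open and meets D. *)
Lemma dense_ptws (I : finType) (Y : topologicalType) (D : set Y) :
  dense D -> dense [set v : {ptws I -> Y} | forall i, D (v i)].
Proof.
move=> D_dense O [v Ov] oO.
suff [w [Ow Dw]] : exists w, O w /\ forall i, i \in enum I -> D (w i).
  by exists w; split=> // i; apply: Dw; rewrite mem_enum.
elim: (enum I) => [|i s [w [Ow Dw]]]; first by exists v.
have wiO : open (dfwith w i @^-1` O).
  by apply: (continuousP _).1 oO; exact: dfwith_continuous.
have [|y [Oy Dy]] := D_dense _ _ wiO.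
  exists (w i); rewrite /= (_ : dfwith w i (w i) = w) //.
  by apply: functional_extensionality_dep => j; case: dfwithP.
exists (dfwith w i y); split=> // j; rewrite inE.
have [<- _|ij] := eqVneq i j; first by rewrite dfwithin.
by rewrite dfwithout //=; exact: Dw.
Qed.

Section MetrizableTVS.
Variables (R : realType) (K : numFieldType) (X : topologicalLmodType K).
Variable d : X -> X -> R.
Hypothesis d_ge0 : forall x y, 0 <= d x y.
Hypothesis d_eq0 : forall x y, d x y = 0 <-> x = y.
Hypothesis d_sym : forall x y, d x y = d y x.
Hypothesis d_tri : forall x y z, d x z <= d x y + d y z.
Hypothesis d_inv : forall x y z, d (x + z) (y + z) = d x y.
Hypothesis d_nbhs : forall (x : X) (A : set X),
  nbhs x A <-> exists2 e : R, 0 < e & [set y | d x y < e] `<=` A.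
Hypothesis K_complete : seq_complete K.

Lemma ball_nbhs x (r : R) : 0 < r -> nbhs x [set y | d x y < r].
Proof. by move=> r0; apply/d_nbhs; exists r. Qed.

Lemma dist0B x z : d 0 (x - z) = d z x.
Proof. by rewrite -(d_inv 0 (x - z) z) add0r subrK. Qed.

Lemma closure_seq (A : set X) y : closure A y ->
  exists s : nat -> X, (forall n, A (s n)) /\ s @ \oo --> y.
Proof.
move=> Ay.
have /choice[s Hs] : forall n, exists z, A z /\ d y z < n.+1%:R^-1.
  move=> n; have n_gt0 : 0 < n.+1%:R^-1 :> R by rewrite invr_gt0 ltr0Sn.
  by have [z [Az yz]] := Ay _ (ball_nbhs y n_gt0); exists z.
exists s; split=> [n|B /d_nbhs[r r0 rB]]; first exact: (Hs n).1.
have [N _ N_r] := near_infty_natSinv_lt (PosNum r0).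
by exists N => // n Nn; apply: rB; apply: lt_trans (N_r n Nn); exact: (Hs n).2.
Qed.

Lemma closed_zero : closed [set (0 : X)].
Proof.
move=> y y0 /=; apply/d_eq0; apply: contrapT => /eqP dy0.
have dy0_gt0 : 0 < d y 0 by rewrite lt_neqAle eq_sym dy0 d_ge0.
by have [z [/= -> ]] := y0 _ (ball_nbhs y dy0_gt0); rewrite /= ltxx.
Qed.

Lemma dist0_scale_small u (r : R) : 0 < r ->
  exists2 del : K, 0 < del & forall t, `|t| < del -> d 0 (t *: u) < r.
Proof.
move=> r0; have : nbhs (0 *: u) [set z | d 0 z < r] by rewrite scale0r; exact: ball_nbhs.
move=> /scale_continuous_nbhs[del del0 [A /nbhs_singleton Au small]].
by exists del => // t t_del; apply: small Au; rewrite sub0r normrN.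
Qed.

Section SnocClosed.
Variables (k : nat) (w : 'I_k -> X) (u : X).
Hypothesis w_closed : closed (lspan w).
Hypothesis u_notin : ~ lspan w u.

(* If |a| were large, a^-1 (sum c w + a u) = u - z with z in span w would be
   close to 0; but some neighbourhood of u misses the closed set span w. *)
Lemma lspan_snoc_coef_bounded : exists2 U : set X, nbhs 0 U &
  exists2 C : K, 0 < C & forall c a, U (\sum_(i < k) c i *: w i + a *: u) -> `|a| < C.
Proof.
have [B uB Bw] : exists2 B, nbhs u B & forall z, B z -> ~ lspan w z.
  apply: contrapT => noB; apply: u_notin; apply: w_closed => B uB.
  apply: contrapT => wB0; apply: noB; exists B => // z Bz wz.
  by apply: wB0; exists z.
have [r r0 rB] := (d_nbhs u B).1 uB.
have : nbhs (0 *: (0 : X)) [set y | d 0 y < r] by rewrite scale0r; exact: ball_nbhs.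
move=> /scale_continuous_nbhs[del del0 [U U0 small]].
have C0 : 0 < 2 / del by rewrite divr_gt0.
exists U => //; exists (2 / del) => // c a Ua.
have [//|a_small] := boolP (`|a| < 2 / del); exfalso.
have a_big : 2 / del <= `|a|.
  by rewrite real_leNgt ?normr_real //; exact: gtr0_real.
have a_neq0 : a != 0 by rewrite -normr_gt0; exact: lt_le_trans C0 a_big.
have a_inv : `|0 - a^-1| < del.
  rewrite sub0r normrN normrV ?unitfE //; apply: le_lt_trans (_ : (2 / del)^-1 < del).
    by rewrite lef_pV2 ?posrE ?normr_gt0.
  by rewrite invf_div ltr_pdivrMr // ltr_pMr // ltr1n.
pose z := \sum_(i < k) (- (a^-1 * c i)) *: w i.
apply: (Bw z); last by exists (fun i => - (a^-1 * c i)).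
apply: rB; rewrite /= d_sym -dist0B.
have -> : u - z = a^-1 *: (\sum_(i < k) c i *: w i + a *: u).
  rewrite scalerDr scalerA mulVf // scale1r addrC /z -sumrN scaler_sumr; congr (_ + _).
  by apply: eq_bigr => i _; rewrite scaleNr opprK scalerA.
exact: small.
Qed.

Lemma lspan_snoc_coef_small (e : K) : 0 < e -> exists2 r : R, 0 < r &
  forall c a, d 0 (\sum_(i < k) c i *: w i + a *: u) < r -> `|a| < e.
Proof.
move=> e0; have [U U0 [C C0 bounded]] := lspan_snoc_coef_bounded.
have : nbhs ((C / e) *: (0 : X)) U by rewrite scaler0.
move=> /scale_continuous_nbhs[del del0 [A A0 scaled]].
have [r r0 rA] := (d_nbhs 0 A).1 A0.
exists r => // c a /rA/(scaled (C / e)); rewrite subrr normr0 => /(_ del0).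
rewrite scalerDr scaler_sumr scalerA.
under eq_bigr do rewrite scalerA.
move=> /bounded; rewrite normrM gtr0_norm ?divr_gt0 //.
by rewrite -[X in _ < X](divfK (lt0r_neq0 e0)) ltr_pM2l ?divr_gt0.
Qed.

Variables (c : nat -> 'I_k -> K) (a : nat -> K) (y : X).
Hypothesis lincomb_cvg : (fun n => \sum_(i < k) c n i *: w i + a n *: u) @ \oo --> y.

Lemma lspan_snoc_coef_cauchy (e : K) : 0 < e ->
  exists N, forall m n, (N <= m)%N -> (N <= n)%N -> `|a m - a n| < e.
Proof.
move=> e0; have [r r0 small] := lspan_snoc_coef_small e0.
have r2 : 0 < r / 2 by rewrite divr_gt0.
have [N _ near_y] := lincomb_cvg (ball_nbhs y r2).
exists N => m n Nm Nn; apply: (small (fun i => c m i - c n i)).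
rewrite scalerBl.
under eq_bigr do rewrite scalerBl.
rewrite sumrB addrACA -opprD dist0B; apply: le_lt_trans (d_tri _ y _) _.
by rewrite d_sym (splitr r) ltrD //; [exact: near_y Nn | exact: near_y Nm].
Qed.

Lemma closure_lspan_coef_lim (al : K) :
  (forall e : K, 0 < e -> exists N, forall n, (N <= n)%N -> `|a n - al| < e) ->
  closure (lspan w) (y - al *: u).
Proof.
move=> a_cvg B /d_nbhs[r r0 rB].
have r2 : 0 < r / 2 by rewrite divr_gt0.
have [del del0 small] := dist0_scale_small u r2.
have [N1 N1_del] := a_cvg _ del0.
have [N2 _ near_y] := lincomb_cvg (ball_nbhs y r2).
pose n := maxn N1 N2; pose z := \sum_(i < k) c n i *: w i.
exists z; split; first by exists (c n).
apply: rB; apply: le_lt_trans (d_tri _ (z + a n *: u - al *: u) _) _.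
rewrite d_inv (splitr r) ltrD //; first exact: near_y (leq_maxr _ _).
rewrite -dist0B (_ : z - _ = (al - a n) *: u); last first.
  by rewrite scalerBl -addrA opprD addNKr opprB.
by apply: small; rewrite distrC; exact: N1_del (leq_maxl _ _).
Qed.

End SnocClosed.

Lemma lspan_snoc_closed k (w : 'I_k -> X) u :
  closed (lspan w) -> ~ lspan w u -> closed (lspan (ord_snoc w u)).
Proof.
move=> w_closed u_notin y /closure_seq[s [s_span s_cvg]].
have /choice[f sf] : forall n, exists c, s n = \sum_(i < k.+1) c i *: ord_snoc w u i.
  by move=> n; have [c _ <-] := s_span n; exists c.
pose c n := ord_belast (f n); pose a n := f n ord_max.
have sE : s = fun n => \sum_(i < k) c n i *: w i + a n *: u.
  by apply: funext => n; rewrite sf -[f n]ord_snoc_belast lincomb_ord_snoc.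
rewrite sE in s_cvg.
have [al a_cvg] := K_complete (lspan_snoc_coef_cauchy w_closed u_notin s_cvg).
have [g _ gE] := w_closed _ (closure_lspan_coef_lim s_cvg a_cvg).
by exists (ord_snoc g al) => //; rewrite lincomb_ord_snoc gE subrK.
Qed.

Lemma lspan_closed k (v : 'I_k -> X) : lin_indep v -> closed (lspan v).
Proof.
elim: k v => [v _|k IH v].
  have -> : lspan v = [set 0].
    apply/seteqP; split=> [_ [c _ <-]|_ ->] /=; first by rewrite big_ord0.
    by exists (fun=> 0) => //; rewrite big_ord0.
  exact: closed_zero.
rewrite -[v]ord_snoc_belast => /lin_indep_snocE[v_indep vmax_notin].
exact: lspan_snoc_closed (IH _ v_indep) vmax_notin.
Qed.

Lemma dense_infdim_subspace (D : set X) :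
  dense D -> infinite_dimensional X -> infdim_subspace D.
Proof.
move=> D_dense X_infdim; elim=> [|n [v [Dv v_indep]]].
  by exists (fun=> 0); split=> [[]|c _ []].
have [z [Dz z_notin]] : exists z, D z /\ ~ lspan v z.
  apply: contrapT => noz.
  have D_span : D `<=` lspan v.
    by move=> z Dz; apply: contrapT => z_notin; apply: noz; exists z.
  have [u u_indep] := X_infdim n.+1.
  apply: (lin_dep_in_lspan _ u_indep) => j.
  exact/(lspan_closed v_indep)/(closureS D_span)/closure_dense.
exists (ord_snoc v z); split; last exact/lin_indep_snocE.
by move=> i; rewrite /ord_snoc; case: unlift.
Qed.

End MetrizableTVS.

Lemma iter_semiconj (A B : Type) (f : A -> A) (g : B -> B) (phi : A -> B) :
  phi \o f = g \o phi -> forall n x, iter n g (phi x) = phi (iter n f x).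
Proof.
move=> phi_f; elim=> //= n IH x.
by rewrite IH; have /= -> := congr1 (@^~ (iter n f x)) phi_f.
Qed.

Lemma continuous_iter (Y : topologicalType) (f : Y -> Y) n :
  continuous f -> continuous (iter n f).
Proof.
move=> f_cont; elim: n => [|n IH] x /=; first exact: cvg_id.
exact: (continuous_comp (IH x) (f_cont _)).
Qed.

Lemma commutant_iter (Y : topologicalType) (f : Y -> Y) n :
  continuous f -> commutant f (iter n f).
Proof.
move=> f_cont; split; first exact: continuous_iter.
by apply: funext => z /=; rewrite -iterSr -iterS.
Qed.

Section Recurrence.
Variables (F : set (set nat)) (Y : topologicalType) (f : Y -> Y).
Hypothesis F_up : forall A B, F A -> A `<=` B -> F B.

Lemma F_hypercyclic_recurrent x : F_hypercyclic F f x -> F_recurrent F f x.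
Proof.
move=> x_hc U; rewrite nbhsE => -[B [oB Bx] BU].
by apply: F_up (x_hc _ oB _) _; [exists x | move=> n /BU].
Qed.

Lemma F_recurrent_semiconj (Z : topologicalType) (g : Z -> Z) (phi : Y -> Z) x :
  continuous phi -> phi \o f = g \o phi -> F_recurrent F f x -> F_recurrent F g (phi x).
Proof.
move=> phi_cont phi_f x_rec U /phi_cont/x_rec/F_up; apply => n /=.
by rewrite /return_set /= (iter_semiconj phi_f).
Qed.

Lemma F_recurrent_power_commutant_orbit N x (v : power_space Y N) :
  F_recurrent F f x -> (forall i, commutant_orbit f x (v i)) ->
  F_recurrent F (diag_op f) v.
Proof.
move=> x_rec v_orbit.
have /choice[S S_comm] : forall i, exists S, commutant f S /\ S x = v i.
  by move=> i; have [S S_comm Sx] := v_orbit i; exists S.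
have -> : v = (fun i => S i x) by apply: funext => i; rewrite (S_comm i).2.
pose phi z : power_space Y N := fun i => S i z.
apply: (F_recurrent_semiconj (phi := phi) _ _ x_rec).
  by apply: continuous_ptws => i; exact: (S_comm i).1.1.
by apply: funext => z; apply: funext => i; exact: (congr1 (@^~ z) (S_comm i).1.2).
Qed.

End Recurrence.

Lemma F_hypercyclic_dense_orbit (F : set (set nat)) (Y : topologicalType) (f : Y -> Y) x :
  (forall A, F A -> infinite_set A) -> F_hypercyclic F f x ->
  dense (range (fun n => iter n f x)).
Proof.
move=> F_inf x_hc O O0 oO.
have [n On] : return_set f x O !=set0.
  apply/set0P/negP => /eqP O_never; apply: (F_inf _ (x_hc O oO O0)).
  by rewrite O_never; exact: finite_set0.
by exists (iter n f x); split=> //; exists n.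
Qed.

Section Commutant.
Variables (K : numFieldType) (X : topologicalLmodType K) (T : {linear X -> X}).

Lemma commutant_orbit_subspace x : is_subspace (commutant_orbit T x).
Proof.
split.
- exists (fun=> 0) => //; split; first exact: cst_continuous.
  by apply: funext => z /=; rewrite linear0.
- move=> _ _ [S1 [S1_cont S1T] <-] [S2 [S2_cont S2T] <-].
  exists (fun z => S1 z + S2 z) => //; split.
    by move=> z; exact: continuous_comp (cvg_pair (S1_cont z) (S2_cont z)) (add_continuous _).
  apply: funext => z /=; rewrite linearD.
  by have /= -> := congr1 (@^~ z) S1T; have /= -> := congr1 (@^~ z) S2T.
- move=> a _ [S [S_cont ST] <-]; exists (fun z => a *: S z) => //; split.
    by move=> z; exact: continuous_comp (cvg_pair (cvg_cst (a : K^o)) (S_cont z))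
      (scale_continuous _).
  by apply: funext => z /=; rewrite linearZ; have /= -> := congr1 (@^~ z) ST.
Qed.

Lemma orbit_span_sub_commutant_orbit x :
  continuous T -> orbit_span T x `<=` commutant_orbit T x.
Proof.
move=> T_cont _ [n [c [m ->]]].
apply: is_subspace_lincomb (commutant_orbit_subspace x) _ => i.
by exists (iter (m i) T) => //; exact: commutant_iter.
Qed.

End Commutant.

Section PowerSubspace.
Variables (K : numFieldType) (V : lmodType K) (I : eqType) (D : set V).

Lemma is_subspace_power :
  is_subspace D -> is_subspace [set v : I -> V | forall i, D (v i)].
Proof.
move=> [D0 DD DZ]; split=> [i|v w Dv Dw i|a v Dv i]; first exact: D0.
  exact: DD.
exact: DZ.
Qed.

Lemma infdim_subspace_power (i0 : I) :
  D 0 -> infdim_subspace D -> infdim_subspace [set v : I -> V | forall i, D (v i)].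
Proof.
move=> D0 D_infdim n; have [v [Dv v_indep]] := D_infdim n.
exists (fun j i => if i == i0 then v j else 0); split=> [j i|c c0].
  by case: ifP.
apply: v_indep; rewrite -[RHS]/((0 : I -> V) i0) -c0 fct_sumE.
by apply: eq_bigr => j _; rewrite [RHS]/GRing.scale /= eqxx.
Qed.

End PowerSubspace.

Theorem mainTheorem17 (R : realType) (b : bool)
  (X : topologicalLmodType (RorC R b))
  (HF : Fspace R X) (Hsep : separable_space X)
  (Hinf : infinite_dimensional X)
  (T : {linear X -> X}) (Tcont : continuous T)
  (F : set (set nat)) (HFam : Furstenberg_family F) :
  ((exists x : X, F_recurrent F T x /\ dense (commutant_orbit T x)) \/
   (exists x : X, F_recurrent F T x /\ cyclic_vector T x) \/
   (exists x : X, F_hypercyclic F T x)) ->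
  forall N : nat, (0 < N)%N ->
    exists S : set ('I_N -> X),
      [/\ is_subspace S, infdim_subspace S,
          @dense (power_space X N) S &
          S `<=` FRec F (@diag_op X N T)].
Proof.
move=> hyp N N_gt0; have [F_inf F_up _] := HFam.
have [x [x_rec x_dense]] : exists x, F_recurrent F T x /\ dense (commutant_orbit T x).
  case: hyp => [//|[[x [x_rec x_cyclic]]|[x x_hc]]]; exists x.
    split=> //; apply: dense_subset x_cyclic _.
    exact: orbit_span_sub_commutant_orbit Tcont.
  split; first exact: F_hypercyclic_recurrent F_up _ x_hc.
  apply: dense_subset (F_hypercyclic_dense_orbit F_inf x_hc) _ => _ [n _ <-].
  by exists (iter n T) => //; exact: commutant_iter Tcont.
have [d [d_ge0 [d_eq0 [d_sym [d_tri [d_inv [d_nbhs _]]]]]]] := HF.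
have D_subspace := commutant_orbit_subspace T x; have [D0 _ _] := D_subspace.
exists [set v | forall i, commutant_orbit T x (v i)]; split.
- exact: is_subspace_power D_subspace.
- apply: infdim_subspace_power (Ordinal N_gt0) D0 _.
  exact: dense_infdim_subspace d_ge0 d_eq0 d_sym d_tri d_inv d_nbhs
    (@seq_complete_RorC R b) _ x_dense Hinf.
- exact: dense_ptws.
- by move=> v; exact: F_recurrent_power_commutant_orbit F_up _ _ _ x_rec.
Qed.
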